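(* Let $p,n\in\mathbb N$ with $p\ge n\ge 10$, and let $G\in \mathrm{Ex}(p;T_n^3)$. If $G$ is connected, then $\Delta(G)\in\{n-5,n-4\}$.
   Context: All graphs are finite simple graphs; $\Delta(G)$ is the maximum degree of $G$. For a graph $L$, $\mathrm{ex}(p;L)$ is the maximum number of edges in a graph on $p$ vertices containing no subgraph isomorphic to $L$, and $\mathrm{Ex}(p;L)$ is the set of graphs on $p$ vertices containing no copy of $L$ and having exactly $\mathrm{ex}(p;L)$ edges. For $n\ge 6$, $T_n^3$ is the tree on vertex set $\{v_0,\ldots,v_{n-1}\}$ with edge set $\{v_0v_1,\ldots,v_0v_{n-4},\ v_1v_{n-3},\ v_1v_{n-2},\ v_1v_{n-1}\}$. *)

From mathcomp Require Import all_boot.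
Set Implicit Arguments. Unset Strict Implicit. Unset Printing Implicit Defensive.

Definition simple_graph (p : nat) (e : rel 'I_p) : Prop :=
  symmetric e /\ irreflexive e.

Definition nedges (p : nat) (e : rel 'I_p) : nat :=
  #|[set xy : 'I_p * 'I_p | e xy.1 xy.2 && (xy.1 < xy.2)]|.

Definition degree (p : nat) (e : rel 'I_p) (x : 'I_p) : nat :=
  #|[set y | e x y]|.

Definition maxdeg (p : nat) (e : rel 'I_p) : nat :=
  \max_(x : 'I_p) degree e x.

Definition connected_graph (p : nat) (e : rel 'I_p) : Prop :=
  forall x y : 'I_p, connect e x y.

Definition contains_copy (m p : nat) (l : rel 'I_m) (e : rel 'I_p) : Prop :=
  exists f : 'I_m -> 'I_p, injective f /\ forall i j, l i j -> e (f i) (f j).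

(* The tree T_n^3 on vertices v_0..v_{n-1}:
   edges v0 v_i (1 <= i <= n-4) and v1 v_{n-3}, v1 v_{n-2}, v1 v_{n-1}. *)
Definition T3_half (n : nat) (i j : 'I_n) : bool :=
  ((i == 0 :> nat) && (1 <= j <= n - 4)) ||
  ((i == 1 :> nat) && (n - 3 <= j <= n - 1)).

Definition T3 (n : nat) : rel 'I_n := fun i j => T3_half i j || T3_half j i.

Definition in_Ex (m p : nat) (l : rel 'I_m) (e : rel 'I_p) : Prop :=
  simple_graph e /\ ~ contains_copy l e /\
  forall h : rel 'I_p, simple_graph h -> ~ contains_copy l h ->
    nedges h <= nedges e.

Arguments T3 : clear implicits.

From mathcomp Require Import all_boot zify.
Set Implicit Arguments. Unset Strict Implicit. Unset Printing Implicit Defensive.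

(* Lower bound: if Delta(G) <= n - 6, adding any missing edge keeps the maximum degree
   below n - 4, the maximum degree of T_n^3, so the larger graph is still T_n^3-free,
   contradicting extremality.
   Upper bound: for a vertex set S with |S| < n, deleting every edge that meets S and
   turning S into a clique gives a T_n^3-free graph, because T_n^3 is connected.  Hence
   extremality forces the switching inequality
   sum_(x in S) (d(x) + d_out(x)) >= |S| (|S| - 1), where d_out(x) counts the neighbours
   of x outside S.  Around a vertex v of degree >= n - 3 it fails for a suitable S:
   a neighbour u of v with three more neighbours, sufficiently many of them outside
   N[v], spans a copy of T_n^3 with v as v_0 and u as v_1, so the neighbours of v have
   small degree or no outside neighbours.  Take S to be n - 2 neighbours of v when
   d(v) >= n - 1, S = N[v] when Delta = n - 2 (connectivity supplies a neighbour of v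
   with an outside neighbour), and S = N[v] plus one more vertex when Delta = n - 3. *)

Lemma card_setb (T : finType) (P : pred T) : #|[set x | P x]| = \sum_x P x.
Proof. by rewrite -sum1dep_card big_mkcond; apply: eq_bigr => x _; case: (P x). Qed.

Lemma card_setIb (T : finType) (A : {set T}) (P : pred T) :
  #|[set x in A | P x]| = \sum_(x in A) P x.
Proof.
by rewrite card_setb [RHS]big_mkcond; apply: eq_bigr => x _; case: (x \in A).
Qed.

Lemma exists_subset_card (T : finType) (A B : {set T}) k :
  A \subset B -> #|A| <= k <= #|B| ->
  exists W : {set T}, [/\ A \subset W, W \subset B & #|W| = k].
Proof.
move=> AB /andP[Ak kB].
have /card_geqP[s [s_uniq s_size sBA]] : k - #|A| <= #|B :\: A| by rewrite cardsDS //; lia.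
exists (A :|: [set x in s]); split; first exact: subsetUl.
  by rewrite subUset AB; apply/subsetP => x; rewrite inE => /sBA; rewrite inE => /andP[].
rewrite cardsU (_ : A :&: _ = set0) ?cards0 ?subn0.
  by rewrite cardsE (card_uniqP s_uniq) s_size; lia.
by apply/setP => x; rewrite !inE; apply/andP => -[xA /sBA]; rewrite inE xA.
Qed.

Lemma exists_notin (T : finType) (S : {set T}) : #|S| < #|T| -> exists x, x \notin S.
Proof.
move=> ST; have /subsetPn[x _ xS] : ~~ ([set: T] \subset S).
  by apply: contraL ST => /subset_leq_card; rewrite cardsT leqNgt.
by exists x.
Qed.

Lemma sum_ltn_const (T : finType) (S : {set T}) (F : T -> nat) c a :
  a \in S -> (forall x, x \in S -> F x <= c) -> F a < c -> \sum_(x in S) F x < #|S| * c.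
Proof.
move=> aS Fc Fa; rewrite -sum_nat_const (bigD1 a) //= [X in _ < X](bigD1 a) //=.
by rewrite -addSn leq_add //; apply: leq_sum => x /andP[/Fc].
Qed.

Lemma connect_cut (T : finType) (e : rel T) (S : {set T}) x y :
  connect e x y -> x \in S -> y \notin S -> exists a b, [/\ a \in S, b \notin S & e a b].
Proof.
move=> /connectP[s]; elim: s x => [|z s IHs] x /=; first by move=> _ -> xS /negP.
case/andP=> exz zs ylast xS yS.
have [zS|zS] := boolP (z \in S); first exact: IHs zs ylast zS yS.
by exists x, z.
Qed.

Section Degrees.
Variables (p : nat) (e : rel 'I_p).

Definition nbhd x : {set 'I_p} := [set y | e x y].
Definition closed_nbhd x : {set 'I_p} := x |: nbhd x.
Definition cut_degree (S : {set 'I_p}) x : nat := #|[set y in ~: S | e x y]|.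

Lemma card_nbhd x : #|nbhd x| = degree e x.
Proof. by []. Qed.

Lemma degreeE x : degree e x = \sum_y e x y.
Proof. exact: card_setb. Qed.

Lemma cut_degreeE S x : cut_degree S x = \sum_(y in ~: S) e x y.
Proof. exact: card_setIb. Qed.

Lemma degree_cut (S : {set 'I_p}) x : degree e x = \sum_(y in S) e x y + cut_degree S x.
Proof.
rewrite degreeE cut_degreeE (bigID (mem S)) /=.
by congr (_ + _); apply: eq_bigl => y; rewrite inE.
Qed.

Lemma cut_degree_le (S : {set 'I_p}) x : cut_degree S x <= degree e x.
Proof. by rewrite (degree_cut S) leq_addl. Qed.

Lemma cut_degree_lt (S : {set 'I_p}) x y :
  y \in S -> e x y -> cut_degree S x < degree e x.
Proof. by move=> yS exy; rewrite (degree_cut S) (bigD1 y) //= exy -addnA addSn ltnS leq_addl. Qed.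

Lemma cut_degreeU1 (S : {set 'I_p}) x y : y \notin S ->
  cut_degree (y |: S) x + e x y = cut_degree S x.
Proof.
move=> yS; rewrite !cut_degreeE [in RHS](bigD1 y) ?inE //= addnC; congr (_ + _).
by apply: eq_bigl => z; rewrite !inE negb_or andbC.
Qed.

Lemma card_closed_nbhd v : irreflexive e -> #|closed_nbhd v| = (degree e v).+1.
Proof. by move=> eirr; rewrite cardsU1 inE eirr. Qed.

Lemma cut_degree_closed_nbhd v : cut_degree (closed_nbhd v) v = 0.
Proof.
apply/eqP; rewrite cards_eq0; apply/eqP/setP => y.
by rewrite !inE; case: (e v y); rewrite ?orbT ?andbF.
Qed.

Lemma sum_degree_cut (S : {set 'I_p}) : symmetric e ->
  \sum_x degree e x =
    \sum_(x in ~: S) cut_degree S x + \sum_(x in S) (degree e x + cut_degree S x).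
Proof.
move=> esym; rewrite big_split /= addnCA addnC (bigID (mem S)) /= addnC; congr (_ + _).
under eq_bigr => x _ do rewrite (degree_cut S x).
rewrite big_split /= addnC; congr (_ + _); first by apply: eq_bigl => x; rewrite inE.
rewrite exchange_big /=; apply: eq_bigr => y yS; rewrite cut_degreeE.
by apply: eq_big => [x|x _]; rewrite ?inE // esym.
Qed.

End Degrees.

Lemma nedges_double p (e : rel 'I_p) :
  simple_graph e -> (nedges e).*2 = \sum_x degree e x.
Proof.
move=> [esym eirr].
have lt_half : nedges e = \sum_x \sum_y (e x y && (x < y)).
  by rewrite /nedges card_setb pair_big /=; apply: eq_bigr => -[].
have gt_half : nedges e = \sum_x \sum_y (e x y && (y < x)).
  by rewrite lt_half exchange_big; do 2!apply: eq_bigr => ? _; rewrite esym.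
rewrite -addnn {1}lt_half gt_half -big_split; apply: eq_bigr => x _.
rewrite degreeE -big_split; apply: eq_bigr => y _ /=.
by case: ltngtP => [||/val_inj->]; rewrite ?eirr ?andbT ?andbF ?addn0.
Qed.

Lemma in_Ex_sum_degree_max m p (l : rel 'I_m) (e h : rel 'I_p) :
  in_Ex l e -> simple_graph h -> ~ contains_copy l h ->
  \sum_x degree h x <= \sum_x degree e x.
Proof.
move=> [esimple [_ emax]] hsimple hfree.
by rewrite -(nedges_double esimple) -(nedges_double hsimple) leq_double emax.
Qed.

Lemma degree_le_maxdeg p (e : rel 'I_p) x : degree e x <= maxdeg e.
Proof. exact: (@leq_bigmax _ (fun x => degree e x)). Qed.

Lemma maxdeg_attained p (e : rel 'I_p) : 0 < p -> exists v, degree e v = maxdeg e.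
Proof.
move=> p_gt0; rewrite /maxdeg.
by have [v ->] := eq_bigmax (fun x => degree e x) (ltac:(by rewrite card_ord)); exists v.
Qed.

Lemma maxdeg_copy m p (l : rel 'I_m) (e : rel 'I_p) :
  contains_copy l e -> maxdeg l <= maxdeg e.
Proof.
move=> [f [finj fl]]; apply/bigmax_leqP => i _; apply: leq_trans (degree_le_maxdeg e (f i)).
rewrite /degree -(card_imset _ finj); apply: subset_leq_card.
by apply/subsetP => _ /imsetP[j lij ->]; rewrite !inE in lij *; apply: fl.
Qed.

Section IsolateClique.
Variables (p : nat) (e : rel 'I_p) (S : {set 'I_p}).

Definition isolate_clique : rel 'I_p :=
  fun x y => if (x \in S) || (y \in S) then [&& x \in S, y \in S & x != y] else e x y.

Lemma isolate_clique_simple : simple_graph e -> simple_graph isolate_clique.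
Proof.
move=> [esym eirr]; split=> [x y|x]; rewrite /isolate_clique.
  by rewrite orbC esym eq_sym; case: (x \in S); case: (y \in S).
by rewrite orbb eqxx andbF; case: (x \in S).
Qed.

Lemma isolate_clique_free m (l : rel 'I_m) :
  connected_graph l -> #|S| < m -> ~ contains_copy l e -> ~ contains_copy l isolate_clique.
Proof.
move=> lconn Sm efree [f [finj fl]].
pose i0 := Ordinal (leq_ltn_trans (leq0n _) Sm).
have fS i : (f i \in S) = (f i0 \in S).
  have Sclosed : closed l [pred j | f j \in S].
    by move=> j k /fl; rewrite /isolate_clique !inE; case: (f j \in S); case: (f k \in S).
  exact/esym/(closed_connect Sclosed (lconn i0 i)).
have [f0S|f0S] := boolP (f i0 \in S).
  have : #|[set f i | i : 'I_m]| <= #|S|.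
    by apply/subset_leq_card/subsetP => _ /imsetP[i _ ->]; rewrite fS.
  by rewrite card_imset // card_ord leqNgt Sm.
apply: efree; exists f; split=> // i j /fl.
by rewrite /isolate_clique !fS (negbTE f0S).
Qed.

Lemma sum_degree_isolate_clique : simple_graph e ->
  \sum_x degree isolate_clique x = \sum_(x in ~: S) cut_degree e S x + #|S| * (#|S| - 1).
Proof.
move=> esimple; have [hsym _] := isolate_clique_simple esimple.
rewrite (sum_degree_cut S hsym); congr (_ + _).
  apply: eq_bigr => x; rewrite inE => /negbTE xS; rewrite !cut_degreeE.
  by apply: eq_bigr => y; rewrite inE => /negbTE yS; rewrite /isolate_clique xS yS.
rewrite -sum_nat_const; apply: eq_bigr => x xS.
have -> : cut_degree isolate_clique S x = 0.
  by rewrite cut_degreeE; apply: big1 => y; rewrite inE /isolate_clique xS => /negbTE->.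
rewrite addn0 (cardsD1 x S) xS add1n subn1 /degree.
by apply: eq_card => y; rewrite !inE /isolate_clique xS /= eq_sym andbC.
Qed.

Lemma in_Ex_clique_bound m (l : rel 'I_m) :
  in_Ex l e -> connected_graph l -> #|S| < m ->
  #|S| * (#|S| - 1) <= \sum_(x in S) (degree e x + cut_degree e S x).
Proof.
move=> eEx lconn Sm; have [esimple [efree _]] := eEx.
have := in_Ex_sum_degree_max eEx (isolate_clique_simple esimple)
          (isolate_clique_free lconn Sm efree).
by rewrite sum_degree_isolate_clique // (sum_degree_cut S esimple.1) leq_add2l.
Qed.

End IsolateClique.

Section AddEdge.
Variables (p : nat) (e : rel 'I_p) (a b : 'I_p).

Definition add_edge : rel 'I_p :=
  fun x y => [|| e x y, (x == a) && (y == b) | (x == b) && (y == a)].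

Lemma add_edge_simple : simple_graph e -> a != b -> simple_graph add_edge.
Proof.
move=> [esym eirr] ab; split=> [x y|x]; rewrite /add_edge.
  by rewrite esym [(x == a) && _]andbC [(x == b) && _]andbC orbA orbAC -orbA.
by rewrite eirr /=; case: (x =P a) => [->|_]; rewrite ?(negbTE ab) ?andbF.
Qed.

Lemma degree_add_edge x : degree add_edge x <= (degree e x).+1.
Proof.
apply: (@leq_trans #|(if x == a then b else a) |: nbhd e x|).
  apply/subset_leq_card/subsetP => y; rewrite !inE /add_edge.
  case/or3P => [->|/andP[/eqP-> /eqP->]|/andP[/eqP-> /eqP->]]; first by rewrite orbT.
    by rewrite !eqxx.
  by case: ifP => [/eqP->|]; rewrite eqxx.
by rewrite cardsU1 -add1n leq_add2r leq_b1.
Qed.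

Lemma sum_degree_add_edge : ~~ e a b -> \sum_x degree e x < \sum_x degree add_edge x.
Proof.
move=> eab; have sub x : nbhd e x \subset [set y | add_edge x y].
  by apply/subsetP => y; rewrite !inE /add_edge => ->.
rewrite (bigD1 a) // [X in _ < X](bigD1 a) //= -addSn; apply: leq_add.
  rewrite /degree; apply: proper_card; apply/properP; split; first exact: sub.
  by exists b; rewrite !inE /add_edge ?eqxx ?orbT // (negbTE eab).
by apply: leq_sum => x _; exact: subset_leq_card (sub x).
Qed.

End AddEdge.

Section T3.
Variable n : nat.
Hypothesis n_gt4 : 4 < n.

Let root : 'I_n := Ordinal (ltnW (ltnW (ltnW (ltnW n_gt4)))).
Let hub : 'I_n := Ordinal (ltnW (ltnW (ltnW n_gt4))).

Lemma T3_sym : symmetric (T3 n).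
Proof. by move=> i j; rewrite /T3 orbC. Qed.

Lemma T3_root (i : 'I_n) : 1 <= i <= n - 4 -> T3 n root i.
Proof. by move=> i_range; rewrite /T3 /T3_half /= i_range. Qed.

Lemma T3_connected : connected_graph (T3 n).
Proof.
have root_connect i : connect (T3 n) root i.
  have [i_le|i_gt] := leqP i (n - 4).
    have [i0|i_pos] := posnP i; last by apply/connect1/T3_root; rewrite i_pos.
    by rewrite (_ : i = root) //; apply: val_inj.
  have root_hub : T3 n root hub by apply: T3_root; rewrite /=; lia.
  have hub_i : T3 n hub i by rewrite /T3 /T3_half /=; have := ltn_ord i; lia.
  exact: connect_trans (connect1 root_hub) (connect1 hub_i).
move=> i j; apply: connect_trans (root_connect j).
by rewrite (sym_connect_sym T3_sym).
Qed.

Lemma maxdeg_T3 : n - 4 <= maxdeg (T3 n).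
Proof.
apply: leq_trans (degree_le_maxdeg _ root).
have succ_lt (j : 'I_(n - 4)) : j.+1 < n by case: j => /= j; lia.
pose succ j := Ordinal (succ_lt j).
have succ_inj : injective succ by move=> j k [] /val_inj.
rewrite -[n - 4]card_ord -(card_imset _ succ_inj); apply/subset_leq_card/subsetP.
by move=> _ /imsetP[j _ ->]; rewrite inE; apply: T3_root; case: j => /= j; lia.
Qed.

End T3.

(* v, u and W play v_0, v_1 and {v_(n-3), v_(n-2), v_(n-1)}; n - 5 further neighbours
   of v play v_2, ..., v_(n-4). *)
Lemma T3_copy p n (e : rel 'I_p) (v u : 'I_p) (W : {set 'I_p}) :
  4 < n -> simple_graph e -> e v u -> W \subset nbhd e u :\ v -> #|W| = 3 ->
  n - 4 <= #|nbhd e v :\: W| -> contains_copy (T3 n) e.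
Proof.
move=> n_gt4 [esym eirr] evu /subsetP Wu W3 Wv.
have uW : u \notin W by apply/negP => /Wu; rewrite !inE eirr andbF.
have /card_geqP[s [s_uniq s_size sv]] : n - 5 <= #|(nbhd e v :\: W) :\ u|.
  by move: Wv; rewrite (cardsD1 u) !inE uW evu /=; set k := #|_|; lia.
have s_nbhd x : x \in s -> [/\ e v x, x \notin W & x != u].
  by move/sv; rewrite !inE => /and3P[-> -> ->].
pose ws := enum W; pose vs := v :: (u :: s) ++ ws.
have ws_nbhd w : w \in ws -> e u w /\ w != v.
  by rewrite mem_enum => /Wu; rewrite !inE => /andP[].
have vs_size : size vs = n by rewrite /= size_cat /= s_size -cardE W3; lia.
have vs_uniq : uniq vs.
  have vu : v != u by apply: contraTneq evu => ->; rewrite eirr.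
  have vs' : v \notin s by apply/negP => /s_nbhd[]; rewrite eirr.
  have vws : v \notin ws by rewrite mem_enum; apply/negP => /Wu; rewrite !inE eqxx.
  have us : u \notin s by apply/negP => /s_nbhd[_ _]; rewrite eqxx.
  have uws : u \notin ws by rewrite mem_enum.
  have wss : ~~ has (mem s) ws.
    by apply/hasPn => w; rewrite mem_enum => wW; apply/negP => /s_nbhd[_]; rewrite wW.
  by rewrite /= cat_uniq /= enum_uniq s_uniq wss !inE !mem_cat !negb_or vu vs' vws us uws.
pose f (i : 'I_n) := nth v vs i.
have vs_root j : 1 <= j <= n - 4 -> e v (nth v vs j).
  case: j => [//|j] /andP[_ j_le] /=; rewrite -cat_cons nth_cat.
  rewrite ifT; last by rewrite /= s_size; lia.
  have j_lt : j < size (u :: s) by rewrite /= s_size; lia.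
  by have /[!inE] /orP[/eqP->|/s_nbhd[]] // := mem_nth v j_lt.
have vs_hub j : n - 3 <= j <= n - 1 -> e u (nth v vs j).
  case: j => [|j] /= /andP[j_ge j_le]; first by lia.
  rewrite -cat_cons nth_cat ifF; last by rewrite /= s_size; lia.
  have j_lt : j - size (u :: s) < size ws by rewrite /= s_size -cardE W3; lia.
  by have /ws_nbhd[] := mem_nth v j_lt.
have T3_half_edge i j : T3_half i j -> e (f i) (f j).
  by case/orP=> /andP[/eqP i_val j_range]; rewrite /f i_val /=; [apply: vs_root | apply: vs_hub].
exists f; split.
  by move=> i j /eqP; rewrite nth_uniq ?vs_size // => /eqP/val_inj.
by move=> i j /orP[/T3_half_edge|/T3_half_edge]; rewrite // esym.
Qed.

Section ExtremalT3.
Variables (p n : nat) (e : rel 'I_p).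
Hypotheses (n_ge10 : 10 <= n) (n_le_p : n <= p) (eEx : in_Ex (T3 n) e).

Let esimple : simple_graph e := eEx.1.
Let esym : symmetric e := esimple.1.
Let eirr : irreflexive e := esimple.2.
Let efree : ~ contains_copy (T3 n) e := eEx.2.1.
Let n_gt4 : 4 < n := ltn_trans (isT : 4 < 9) n_ge10.
Let T3_conn : connected_graph (T3 n) := T3_connected n_gt4.
Let p_gt0 : 0 < p := leq_trans (ltn_trans (isT : 0 < 4) n_gt4) n_le_p.

(* The three leaves at u are taken outside S as far as possible, so that they use up
   at most 3 - minn (cut_degree e S u) 3 of the neighbours of v. *)
Lemma Ex_nbr_degree_le3 (S : {set 'I_p}) v u :
  closed_nbhd e v \subset S -> e v u ->
  n - 1 <= degree e v + minn (cut_degree e S u) 3 -> degree e u <= 3.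
Proof.
move=> /subsetP vS evu dv; rewrite leqNgt; apply/negP => du.
pose O := [set y in ~: S | e u y].
have O_sub : O \subset nbhd e u :\ v.
  apply/subsetP => y; rewrite !inE => /andP[yS ->]; rewrite andbT.
  by apply: contraNneq yS => ->; apply: vS; rewrite !inE eqxx.
have [A [_ AO A_card]] : exists A : {set 'I_p},
    [/\ set0 \subset A, A \subset O & #|A| = minn (cut_degree e S u) 3].
  by apply: (@exists_subset_card _ set0 O); rewrite ?sub0set // cards0 geq_minl.
have [W [AW W_sub W3]] : exists W : {set 'I_p},
    [/\ A \subset W, W \subset nbhd e u :\ v & #|W| = 3].
  apply: (@exists_subset_card _ A (nbhd e u :\ v)); first exact: subset_trans AO O_sub.
  by rewrite A_card geq_minr; move: du; rewrite /degree (cardsD1 v) inE esym evu.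
apply: efree; apply: (@T3_copy _ n _ v u W) => //.
have A_out y : e v y -> y \notin A.
  move=> evy; apply/negP => /(subsetP AO); rewrite !inE => /andP[/negP[]].
  by apply: vS; rewrite !inE evy orbT.
have W_nbhd : nbhd e v :\: (W :\: A) \subset nbhd e v :\: W.
  apply/subsetP => y; rewrite !inE => /andP[yWA evy]; rewrite evy andbT.
  by apply: contra yWA => yW; rewrite yW (A_out _ evy).
apply: leq_trans (subset_leq_card W_nbhd).
have := subset_leq_card (subsetIr (nbhd e v) (W :\: A)).
by rewrite cardsD (cardsDS AW) W3 A_card card_nbhd; lia.
Qed.

Lemma Ex_maxdeg_ge : n - 5 <= maxdeg e.
Proof.
rewrite leqNgt; apply/negP => dmax.
pose a := Ordinal p_gt0.
have [b] : exists b, b \notin closed_nbhd e a.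
  apply: exists_notin; rewrite card_ord card_closed_nbhd //.
  by have := degree_le_maxdeg e a; lia.
rewrite !inE negb_or eq_sym => /andP[ab eab].
have hfree : ~ contains_copy (T3 n) (add_edge e a b).
  move/maxdeg_copy; apply/negP; rewrite -ltnNge.
  apply: leq_trans (maxdeg_T3 n_gt4).
  apply: leq_ltn_trans (_ : (maxdeg e).+1 < n - 4); last by lia.
  apply/bigmax_leqP => x _; apply: leq_trans (degree_add_edge e a b x) _.
  by rewrite ltnS degree_le_maxdeg.
have := in_Ex_sum_degree_max eEx (add_edge_simple esimple ab) hfree.
by rewrite leqNgt sum_degree_add_edge.
Qed.

Lemma Ex_maxdeg_le : maxdeg e <= n - 2.
Proof.
apply/bigmax_leqP => v _; rewrite leqNgt; apply/negP => dv.
have [S [_ S_sub S_card]] : exists S : {set 'I_p},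
    [/\ set0 \subset S, S \subset nbhd e v & #|S| = n - 2].
  by apply: exists_subset_card; rewrite ?sub0set // cards0 /=; apply: ltnW.
have S_low u : u \in S -> degree e u <= 3.
  move=> /(subsetP S_sub); rewrite inE => evu.
  by apply: (Ex_nbr_degree_le3 (subxx _) evu); apply: leq_trans (leq_addr _ _); lia.
have S_lt : #|S| < n by rewrite S_card; lia.
move: (in_Ex_clique_bound eEx T3_conn S_lt); apply/negP; rewrite -ltnNge.
apply: (@leq_ltn_trans (#|S| * 6)).
  rewrite -sum_nat_const; apply: leq_sum => u uS.
  by have := S_low u uS; have := cut_degree_le e S u; lia.
by rewrite S_card ltn_mul2l; lia.
Qed.

Lemma Ex_maxdeg_neq_n2 : connected_graph e -> maxdeg e != n - 2.
Proof.
move=> econn; apply/eqP => dmax.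
have [v dv] := maxdeg_attained e p_gt0.
rewrite dmax in dv; pose S := closed_nbhd e v.
have S_card : #|S| = n - 1 by rewrite card_closed_nbhd // dv; lia.
have vS : v \in S by rewrite !inE eqxx.
have [y yS] : exists y, y \notin S by apply: exists_notin; rewrite card_ord S_card; lia.
have [a [b [aS bS eab]]] := connect_cut (econn v y) vS yS.
have nbhd_low u : e v u -> 0 < cut_degree e S u -> degree e u + cut_degree e S u <= 6.
  move=> evu cut_pos; have := cut_degree_le e S u.
  have : degree e u <= 3 by apply: (Ex_nbr_degree_le3 (subxx S) evu); rewrite dv; lia.
  lia.
have eva : e v a.
  by move: aS; rewrite !inE => /orP[/eqP av|//]; move: bS; rewrite !inE -av eab orbT.
have S_lt : #|S| < n by rewrite S_card; lia.
move: (in_Ex_clique_bound eEx T3_conn S_lt); apply/negP; rewrite -ltnNge.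
apply: (@leq_trans (#|S| * (n - 2))); last by rewrite S_card leq_mul2l; lia.
apply: (sum_ltn_const (a := a)) => // [x|].
  rewrite !inE => /orP[/eqP->|evx]; first by rewrite dv cut_degree_closed_nbhd addn0.
  have [->|cut_pos] := posnP (cut_degree e S x).
    by rewrite addn0 -dmax degree_le_maxdeg.
  by apply: leq_trans (nbhd_low x evx cut_pos) _; lia.
have cut_pos : 0 < cut_degree e S a by apply/card_gt0P; exists b; rewrite inE in_setC bS.
by apply: leq_ltn_trans (nbhd_low a eva cut_pos) _; lia.
Qed.

Section MaxDegreeNMinus3.
Variable v : 'I_p.
Hypotheses (dmax : maxdeg e = n - 3) (dv : degree e v = n - 3).

Let S0 := closed_nbhd e v.

Lemma n3_card_S0 : #|S0| = n - 2.
Proof. by rewrite card_closed_nbhd // dv; lia. Qed.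

Lemma n3_nbhd_low u : e v u -> 1 < cut_degree e S0 u -> degree e u <= 3.
Proof.
by move=> evu cut_gt1; apply: (Ex_nbr_degree_le3 (subxx S0) evu); rewrite dv; lia.
Qed.

Lemma n3_clique_bound y : y \notin S0 ->
  (n - 1) * (n - 2) <= \sum_(x in S0) (degree e x + cut_degree e (y |: S0) x)
                       + (degree e y + cut_degree e (y |: S0) y).
Proof.
move=> yS0; have S_card : #|y |: S0| = n - 1 by rewrite cardsU1 yS0 n3_card_S0; lia.
have := in_Ex_clique_bound eEx T3_conn (_ : #|y |: S0| < n).
rewrite big_setU1 //= S_card addnC (_ : n - 1 - 1 = n - 2); last by lia.
by apply; lia.
Qed.

Lemma n3_S0_bound x : x \in S0 ->
  degree e x + cut_degree e S0 x <= n - 3 \/ (cut_degree e S0 x = 1 /\ degree e x = n - 3).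
Proof.
move=> xS0; have := degree_le_maxdeg e x; rewrite dmax => dx.
have [cut_gt1|] := ltnP 1 (cut_degree e S0 x); last by lia.
have evx : e v x.
  move: xS0; rewrite !inE => /orP[/eqP xv|//].
  by move: cut_gt1; rewrite xv cut_degree_closed_nbhd.
by have := n3_nbhd_low evx cut_gt1; have := cut_degree_le e S0 x; lia.
Qed.

(* Otherwise the unique neighbour y of u outside S0 has at most two neighbours outside
   y |: S0 (else y plays v_1 and u plays v_0), which is too few for the switching
   inequality on y |: S0. *)
Lemma n3_no_hub u : u \in S0 -> cut_degree e S0 u = 1 -> degree e u = n - 3 -> False.
Proof.
move=> uS0 /eqP/cards1P[y yE] du.
have : y \in [set z in ~: S0 | e u z] by rewrite yE set11.
rewrite inE in_setC => /andP[yS0 euy].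
pose S := y |: S0.
have out_y z : e u z -> z \notin S0 -> z = y.
  by move=> euz zS0; apply/set1P; rewrite -yE inE in_setC zS0.
have u_nbhd : closed_nbhd e u \subset S.
  apply/subsetP => z /setU1P[->|]; first by apply/setU1P; right.
  move=> euz; rewrite inE in euz; apply/setU1P.
  by have [zS0|zS0] := boolP (z \in S0); [right | left; apply: out_y].
have cut_y : cut_degree e S y <= 2.
  rewrite leqNgt; apply/negP => cut_gt2.
  have : degree e y <= 3 by apply: (Ex_nbr_degree_le3 u_nbhd euy); rewrite du; lia.
  have uS : u \in S by apply/setU1P; right.
  have yu : e y u by rewrite esym.
  by have := cut_degree_lt uS yu; lia.
have := n3_clique_bound yS0.
rewrite (degree_cut e S y) (big_setU1 y yS0) /= eirr add0n !addnA -big_split /=.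
under eq_bigr => x _ do rewrite -addnA (esym y x) cut_degreeU1 //.
rewrite -/S; apply/negP; rewrite -ltnNge.
have : \sum_(x in S0) (degree e x + cut_degree e S0 x) < #|S0| * (n - 2).
  apply: (sum_ltn_const (a := v)); first by rewrite !inE eqxx.
    by move=> x /n3_S0_bound; lia.
  by rewrite dv cut_degree_closed_nbhd; lia.
have -> : n - 1 = (n - 2).+1 by lia.
rewrite n3_card_S0 mulSn.
by move: ((n - 2) * _) (\sum_(x in S0) _) (cut_degree e S y) cut_y => sq s c c_le2; lia.
Qed.

End MaxDegreeNMinus3.

Lemma Ex_maxdeg_neq_n3 : maxdeg e != n - 3.
Proof.
apply/eqP => dmax; have [v dv] := maxdeg_attained e p_gt0; rewrite dmax in dv.
have [y yS0] : exists y, y \notin closed_nbhd e v.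
  by apply: exists_notin; rewrite card_ord n3_card_S0 //; lia.
have := n3_clique_bound dmax dv yS0; apply/negP; rewrite -ltnNge.
have : \sum_(x in closed_nbhd e v) (degree e x + cut_degree e (y |: closed_nbhd e v) x)
         <= #|closed_nbhd e v| * (n - 3).
  rewrite -sum_nat_const; apply: leq_sum => x xS0; have := cut_degreeU1 e x yS0.
  case: (n3_S0_bound dmax dv xS0) => [|[cut1 dx]]; first by lia.
  by case: (n3_no_hub dmax dv xS0 cut1 dx).
have := cut_degree_le e (y |: closed_nbhd e v) y; have := degree_le_maxdeg e y.
rewrite dmax n3_card_S0 // (_ : (n - 1) * (n - 2) = (n - 2) * (n - 3) + 2 * (n - 2)).
  by move: (\sum_(x in _) _) ((n - 2) * (n - 3)) => s sq; lia.
by rewrite [2 * _]mulnC -mulnDr [LHS]mulnC; congr (_ * _); lia.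
Qed.

End ExtremalT3.

Unset Implicit Arguments.

Theorem lemma4p1 (p n : nat) (e : rel 'I_p) :
  10 <= n -> n <= p ->
  in_Ex (T3 n) e ->
  connected_graph e ->
  maxdeg e = n - 5 \/ maxdeg e = n - 4.
Proof.
move=> n_ge10 n_le_p eEx econn.
have lower := Ex_maxdeg_ge n_ge10 n_le_p eEx.
have upper := Ex_maxdeg_le n_ge10 n_le_p eEx.
have neq_n2 := Ex_maxdeg_neq_n2 n_ge10 n_le_p eEx econn.
have neq_n3 := Ex_maxdeg_neq_n3 n_ge10 n_le_p eEx.
lia.
Qed.
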